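(* Let $G$ be a unit square graph. Then $G$ has no induced subgraph isomorphic to $K_{2,3}$, to $\overline{3K_2}$, or to $\overline{T_2}$.
   Context: A unit square graph is a graph $G$ admitting $f\colon V(G)\to\mathbb{R}^2$ with $vw\in E(G)$ iff $\|f(v)-f(w)\|_\infty\le1$ for distinct $v,w$. $\overline{H}$ denotes the complement of $H$; $3K_2$ is the disjoint union of three edges. $T_2$ is the tree on vertices $w_1,\dots,w_7$ with edges $w_1w_2, w_1w_4, w_1w_6, w_2w_3, w_4w_5, w_6w_7$ (a claw with each edge subdivided once). *)

From Stdlib Require Import Reals Lra Lia.
Open Scope R_scope.

Definition simple_graph (V : Type) (adj : V -> V -> Prop) : Prop :=
  (forall v, ~ adj v v) /\ (forall v w, adj v w -> adj w v).

Definition linf_dist (p q : R * R) : R :=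
  Rmax (Rabs (fst p - fst q)) (Rabs (snd p - snd q)).

Definition unit_square_graph (V : Type) (adj : V -> V -> Prop) : Prop :=
  exists f : V -> R * R,
    forall v w, v <> w -> (adj v w <-> linf_dist (f v) (f w) <= 1).

Definition has_induced_copy (n : nat) (hadj : nat -> nat -> Prop)
    (V : Type) (adj : V -> V -> Prop) : Prop :=
  exists phi : nat -> V,
    (forall i j, (i < n)%nat -> (j < n)%nat -> i <> j -> phi i <> phi j) /\
    (forall i j, (i < n)%nat -> (j < n)%nat -> i <> j ->
       (adj (phi i) (phi j) <-> hadj i j)).

Definition compl_adj (hadj : nat -> nat -> Prop) (i j : nat) : Prop :=
  i <> j /\ ~ hadj i j.

(* K_{2,3} on {0,1} | {2,3,4} (used on vertices 0..4) *)
Definition K23_adj (i j : nat) : Prop :=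
  ((i < 2)%nat /\ (2 <= j)%nat) \/ ((j < 2)%nat /\ (2 <= i)%nat).

(* 3K_2 on vertices 0..5 with edges 01, 23, 45 *)
Definition threeK2_adj (i j : nat) : Prop :=
  i <> j /\ Nat.div i 2 = Nat.div j 2.

(* T_2 on vertices 0..6 (w_k = k-1): edges w1w2, w1w4, w1w6, w2w3, w4w5, w6w7 *)
Definition T2_edge (i j : nat) : Prop :=
  (i = 0%nat /\ j = 1%nat) \/ (i = 0%nat /\ j = 3%nat) \/ (i = 0%nat /\ j = 5%nat) \/
  (i = 1%nat /\ j = 2%nat) \/ (i = 3%nat /\ j = 4%nat) \/ (i = 5%nat /\ j = 6%nat).
Definition T2_adj (i j : nat) : Prop := T2_edge i j \/ T2_edge j i.

(* Two non-adjacent vertices of a unit square graph are more than 1 apart in some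
   coordinate, and then all their common neighbours lie in an interval of length
   less than 1 in that coordinate; hence two non-adjacent common neighbours must be
   separated in the other coordinate.  For K_{2,3} this puts three pairwise
   separated points within distance 1 of a single point, which is impossible.  For
   the complement of 3K_2, if the first missing edge is separated in coordinate k,
   the other two are separated in the other coordinate k', yet each consists of
   common neighbours of the other, so they are close in k'.  The complement of T_2
   contains the complement of 3K_2 on the vertices w_2, ..., w_7. *)

From Stdlib Require Import Reals Lra Lia.
Open Scope R_scope.

Definition coord (k : bool) (p : R * R) : R := if k then fst p else snd p.

Lemma linf_dist_le1 (p q : R * R) :
  linf_dist p q <= 1 <-> forall k, Rabs (coord k p - coord k q) <= 1.
Proof.
  unfold linf_dist; split.
  - intros H [|]; eapply Rle_trans; [apply Rmax_l | exact H | apply Rmax_r | exact H].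
  - intros H; apply Rmax_lub; [apply (H true) | apply (H false)].
Qed.

Lemma linf_dist_gt1_other_coord (p q : R * R) (k : bool) :
  ~ linf_dist p q <= 1 -> Rabs (coord k p - coord k q) <= 1 ->
  1 < Rabs (coord (negb k) p - coord (negb k) q).
Proof.
  intros Hfar Hk; apply Rnot_le_lt; intros Hk'; apply Hfar, linf_dist_le1.
  intros k0; destruct k, k0; assumption.
Qed.

Lemma linf_dist_gt1_coord (p q : R * R) :
  ~ linf_dist p q <= 1 -> exists k, 1 < Rabs (coord k p - coord k q).
Proof.
  intros Hfar; destruct (Rle_lt_dec (Rabs (coord true p - coord true q)) 1) as [H|H].
  - exists false; exact (linf_dist_gt1_other_coord p q true Hfar H).
  - exists true; exact H.
Qed.

Ltac split_Rabs :=
  unfold Rabs in *;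
  repeat match goal with
  | H : context [Rcase_abs ?x] |- _ => destruct (Rcase_abs x)
  | |- context [Rcase_abs ?x] => destruct (Rcase_abs x)
  end.

(* [c] and [d] both lie in the intersection of the unit intervals around [a] and
   [b], which has length less than 1. *)
Lemma Rabs_common_close (a b c d : R) :
  1 < Rabs (a - b) -> Rabs (a - c) <= 1 -> Rabs (b - c) <= 1 ->
  Rabs (a - d) <= 1 -> Rabs (b - d) <= 1 -> Rabs (c - d) < 1.
Proof. intros; split_Rabs; lra. Qed.

Lemma Rabs_no_three_separated (a c d e : R) :
  Rabs (a - c) <= 1 -> Rabs (a - d) <= 1 -> Rabs (a - e) <= 1 ->
  1 < Rabs (c - d) -> 1 < Rabs (c - e) -> 1 < Rabs (d - e) -> False.
Proof. intros; split_Rabs; lra. Qed.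

Lemma common_neighbours_coord_close (k : bool) (a b c d : R * R) :
  1 < Rabs (coord k a - coord k b) ->
  linf_dist a c <= 1 -> linf_dist b c <= 1 ->
  linf_dist a d <= 1 -> linf_dist b d <= 1 ->
  Rabs (coord k c - coord k d) < 1.
Proof.
  rewrite !linf_dist_le1; intros Hab Hac Hbc Had Hbd.
  exact (Rabs_common_close _ _ _ _ Hab (Hac k) (Hbc k) (Had k) (Hbd k)).
Qed.

Definition unit_square_pattern (n : nat) (hadj : nat -> nat -> Prop) : Prop :=
  exists q : nat -> R * R, forall i j, (i < n)%nat -> (j < n)%nat -> i <> j ->
    (hadj i j <-> linf_dist (q i) (q j) <= 1).

Lemma unit_square_induced_copy (V : Type) (adj : V -> V -> Prop) n hadj :
  unit_square_graph V adj -> has_induced_copy n hadj V adj ->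
  unit_square_pattern n hadj.
Proof.
  intros [f Hf] [phi [Hinj Hiff]]; exists (fun i => f (phi i)); intros i j Hi Hj Hij.
  rewrite <- Hiff by assumption; apply Hf, Hinj; assumption.
Qed.

Lemma unit_square_pattern_restrict (g : nat -> nat) m n hadj hadj' :
  (forall i, (i < m)%nat -> (g i < n)%nat) ->
  (forall i j, (i < m)%nat -> (j < m)%nat -> i <> j -> g i <> g j) ->
  (forall i j, (i < m)%nat -> (j < m)%nat -> i <> j -> (hadj' i j <-> hadj (g i) (g j))) ->
  unit_square_pattern n hadj -> unit_square_pattern m hadj'.
Proof.
  intros Hg Hginj Hrel [q Hq]; exists (fun i => q (g i)); intros i j Hi Hj Hij.
  rewrite Hrel by assumption; apply Hq; auto.
Qed.

Lemma K23_not_unit_square : ~ unit_square_pattern 5 K23_adj.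
Proof.
  intros [q Hq].
  assert (edge : forall i j, (i < 2)%nat -> (2 <= j < 5)%nat -> linf_dist (q i) (q j) <= 1).
  { intros i j Hi Hj; apply Hq; unfold K23_adj; lia. }
  assert (nonedge : forall i j, (i < 5)%nat -> (j < 5)%nat -> i <> j -> ~ K23_adj i j ->
            ~ linf_dist (q i) (q j) <= 1).
  { intros i j Hi Hj Hij Hn Hl; apply Hn, Hq; assumption. }
  destruct (linf_dist_gt1_coord _ _ (nonedge 0 1 ltac:(lia) ltac:(lia) ltac:(lia)
              ltac:(unfold K23_adj; lia))%nat) as [k Hk].
  assert (sep : forall i j, (2 <= i < 5)%nat -> (2 <= j < 5)%nat -> i <> j ->
            1 < Rabs (coord (negb k) (q i) - coord (negb k) (q j))).
  { intros i j Hi Hj Hij; apply linf_dist_gt1_other_coord.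
    - apply nonedge; unfold K23_adj; lia.
    - apply Rlt_le, (common_neighbours_coord_close k (q 0%nat) (q 1%nat));
        [exact Hk | apply edge; lia ..]. }
  assert (near : forall j, (2 <= j < 5)%nat ->
            Rabs (coord (negb k) (q 0%nat) - coord (negb k) (q j)) <= 1).
  { intros j Hj; apply linf_dist_le1, edge; lia. }
  apply (Rabs_no_three_separated (coord (negb k) (q 0%nat)) (coord (negb k) (q 2%nat))
           (coord (negb k) (q 3%nat)) (coord (negb k) (q 4%nat)));
    [apply near | apply near | apply near | apply sep | apply sep | apply sep]; lia.
Qed.

Lemma compl_3K2_not_unit_square : ~ unit_square_pattern 6 (compl_adj threeK2_adj).
Proof.
  intros [q Hq].
  assert (edge : forall i j, (i < 6)%nat -> (j < 6)%nat -> Nat.div i 2 <> Nat.div j 2 ->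
            linf_dist (q i) (q j) <= 1).
  { intros i j Hi Hj Hd.
    assert (Hij : i <> j) by (intros ->; apply Hd; reflexivity).
    apply Hq; unfold compl_adj, threeK2_adj; tauto. }
  assert (nonedge : forall i, (i < 3)%nat ->
            ~ linf_dist (q (2 * i)%nat) (q (2 * i + 1)%nat) <= 1).
  { intros i Hi Hl; apply Hq in Hl; [|lia|lia|lia].
    apply (proj2 Hl); unfold threeK2_adj; split; [lia|].
    rewrite Nat.mul_comm, Nat.div_mul, Nat.add_comm, Nat.div_add by lia; reflexivity. }
  destruct (linf_dist_gt1_coord _ _ (nonedge 0%nat ltac:(lia))) as [k Hk]; cbn in Hk.
  assert (sep : forall i, (1 <= i < 3)%nat ->
            1 < Rabs (coord (negb k) (q (2 * i)%nat) - coord (negb k) (q (2 * i + 1)%nat))).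
  { intros i Hi; apply linf_dist_gt1_other_coord; [apply nonedge; lia|].
    assert (Hi' : i = 1%nat \/ i = 2%nat) by lia.
    apply Rlt_le, (common_neighbours_coord_close k (q 0%nat) (q 1%nat)); [exact Hk|..];
      destruct Hi' as [-> | ->]; apply edge; cbn; lia. }
  assert (close45 : Rabs (coord (negb k) (q 4%nat) - coord (negb k) (q 5%nat)) < 1).
  { apply (common_neighbours_coord_close (negb k) (q 2%nat) (q 3%nat));
      [apply (sep 1%nat); lia | apply edge; cbn; lia ..]. }
  pose proof (sep 2%nat ltac:(lia)); cbn in *; lra.
Qed.

Lemma compl_T2_restricts_to_compl_3K2 (i j : nat) :
  (i < 6)%nat -> (j < 6)%nat ->
  (compl_adj threeK2_adj i j <-> compl_adj T2_adj (S i) (S j)).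
Proof.
  unfold compl_adj, threeK2_adj, T2_adj, T2_edge; intros Hi Hj.
  destruct i as [|[|[|[|[|[|i]]]]]]; destruct j as [|[|[|[|[|[|j]]]]]]; cbn;
    try (exfalso; lia); intuition congruence.
Qed.

Lemma compl_T2_not_unit_square : ~ unit_square_pattern 7 (compl_adj T2_adj).
Proof.
  intros H; apply compl_3K2_not_unit_square.
  apply (unit_square_pattern_restrict S 6 7 _ _ (fun i Hi => le_n_S _ _ Hi)
           (fun i j _ _ Hij HS => Hij (eq_add_S _ _ HS))
           (fun i j Hi Hj _ => compl_T2_restricts_to_compl_3K2 i j Hi Hj) H).
Qed.

Theorem mainTheorem7 (V : Type) (adj : V -> V -> Prop) :
  simple_graph V adj ->
  unit_square_graph V adj ->
  ~ has_induced_copy 5 K23_adj V adj /\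
  ~ has_induced_copy 6 (compl_adj threeK2_adj) V adj /\
  ~ has_induced_copy 7 (compl_adj T2_adj) V adj.
Proof.
  intros _ Hsq; repeat split; intros Hcopy;
    apply (unit_square_induced_copy V adj _ _ Hsq) in Hcopy; revert Hcopy.
  - exact K23_not_unit_square.
  - exact compl_3K2_not_unit_square.
  - exact compl_T2_not_unit_square.
Qed.
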